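(* Let $\mathfrak{g}$ be a solvable Lie algebra of dimension $n$ (over $\mathbb{C}$, or real and complexified), with $k=\dim H^1(\mathfrak{g})$, weights $\alpha_{k+1},\dots,\alpha_n$ of the completely reducible representation associated to $\mathrm{ad}|_{[\mathfrak{g},\mathfrak{g}]}$, and let $\Omega_{\mathfrak{g}}$ be the finite set of all sums $\alpha_{i_1}+\dots+\alpha_{i_p}$, $k+1\le i_1<\dots<i_p\le n$, $p\ge 1$. Then there is a subset $\tilde\Omega_{\mathfrak{g}}\subseteq\Omega_{\mathfrak{g}}$, depending only on $\mathfrak{g}$, such that for every closed $1$-form $\omega\in\mathfrak{g}^*$ and scalar $\lambda$, the cohomology $H^*_{\lambda\omega}(\mathfrak{g})$ is non-trivial if and only if $-\lambda\omega\in\{0\}\cup\tilde\Omega_{\mathfrak{g}}$. In particular the set of such $-\lambda\omega$ is a finite subset of $H^1(\mathfrak{g})$.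
   Context: The differential $d$ on $\Lambda^*(\mathfrak{g}^* )$ is $df(X_1,\dots,X_{q+1})=\sum_{1\le i<j\le q+1}(-1)^{i+j-1}f([X_i,X_j],X_1,\dots,\hat X_i,\dots,\hat X_j,\dots,X_{q+1})$; closed $1$-forms on $\mathfrak{g}$ are identified with $H^1(\mathfrak{g})$. For a closed $1$-form $\omega$ and scalar $\lambda$, $H^*_{\lambda\omega}(\mathfrak{g})$ is the cohomology of $\Lambda^*(\mathfrak{g}^* )$ with differential $d_{\lambda\omega}(a)=da+\lambda\omega\wedge a$ (the cohomology of $\mathfrak{g}$ with coefficients in the one-dimensional representation $\xi\mapsto\lambda\omega(\xi)$). The weights $\alpha_j\in\mathfrak{g}^*$ are the linear forms by which $\mathfrak{g}$ acts on the one-dimensional quotients of an $\mathrm{ad}$-invariant flag in $[\mathfrak{g},\mathfrak{g}]$ (Lie's theorem). *)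

From mathcomp Require Import all_boot all_algebra.
From mathcomp Require Import reals.
From mathcomp Require Import complex.
Set Implicit Arguments. Unset Strict Implicit. Unset Printing Implicit Defensive.
Import GRing.Theory.
Local Open Scope ring_scope.

(* Linear forms on V
   (elements of g^* ) are column vectors 'cV[F]_n, acting by [ev a x]. *)

Section LieDefs.
Variable (F : fieldType) (n : nat).
Local Notation V := 'rV[F]_n.
Local Notation form := 'cV[F]_n.

Definition ev (a : form) (x : V) : F := (x *m a) 0 0.

Definition is_lie_bracket (br : V -> V -> V) : Prop :=
  [/\ (forall (c : F) x y z, br (c *: x + y) z = c *: br x z + br y z),
      (forall (c : F) x y z, br x (c *: y + z) = c *: br x y + br x z),
      (forall x, br x x = 0) &
      (forall x y z, br x (br y z) + br y (br z x) + br z (br x y) = 0)].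

(* derived subspace [U,U] of a subspace U (row space of a square matrix) *)
Definition derived (br : V -> V -> V) (U : 'M[F]_n) : 'M[F]_n :=
  (\sum_(i < n) \sum_(j < n) <<br (row i U) (row j U)>>)%MS.

Definition commutator_sub (br : V -> V -> V) : 'M[F]_n := derived br 1%:M.

Definition solvable_lie (br : V -> V -> V) : Prop :=
  exists s : nat, \rank (iter s (derived br) 1%:M) = 0%N.

Definition closed_form (br : V -> V -> V) (a : form) : Prop :=
  forall x y, ev a (br x y) = 0.

(* q-cochains: functions on lists of vectors, relevant on lists of length q,
   multilinear and alternating there *)
Definition rem_at (i : nat) (X : seq V) : seq V := take i X ++ drop i.+1 X.

Definition is_qform (q : nat) (f : seq V -> F) : Prop :=
  (forall (X : seq V) (i : nat) (c : F) (u v : V), size X = q -> (i < q)%N ->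
     f (set_nth 0 X i (c *: u + v)) = c * f (set_nth 0 X i u) + f (set_nth 0 X i v))
  /\ (forall (X : seq V) (i j : nat), size X = q -> (i < j < q)%N ->
        nth 0 X i = nth 0 X j -> f X = 0).

(* twisted differential d_theta f = d f + theta /\ f, with the paper's sign
   conventions (0-based indices):
   (d f)(X_0..X_q) = sum_{i<j} (-1)^(i+j+1) f([X_i,X_j], X without i,j)
   (theta /\ f)(X_0..X_q) = sum_i (-1)^i theta(X_i) f(X without i) *)
Definition dtw (br : V -> V -> V) (theta : form) (f : seq V -> F) : seq V -> F :=
  fun X =>
    \sum_(j < size X) \sum_(i < j)
       (-1) ^+ (i + j + 1)%N * f (br (nth 0 X i) (nth 0 X j) :: rem_at i (rem_at j X))
    + \sum_(i < size X) (-1) ^+ i * ev theta (nth 0 X i) * f (rem_at i X).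

Definition cocycle (br : V -> V -> V) (theta : form) (q : nat) (f : seq V -> F) :=
  forall X : seq V, size X = q.+1 -> dtw br theta f X = 0.

Definition coboundary (br : V -> V -> V) (theta : form) (q : nat) (f : seq V -> F) :=
  if q is q'.+1 then
    exists g : seq V -> F, is_qform q' g /\
      forall X : seq V, size X = q -> f X = dtw br theta g X
  else forall X : seq V, size X = 0%N -> f X = 0.

Definition twisted_cohom_nontrivial (br : V -> V -> V) (theta : form) : Prop :=
  exists (q : nat) (f : seq V -> F),
    [/\ is_qform q f, cocycle br theta q f & ~ coboundary br theta q f].

(* an ad-invariant full flag of [g,g] given by a triangular basis v_0..v_{m-1}
   (V_i = span(v_0..v_{i-1})), with weights alpha_i: g acts on V_{i+1}/V_i
   by alpha_i *)
Definition flagmx m (v : 'I_m -> V) : 'M[F]_(m, n) := \matrix_(i < m) v i.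

Definition lie_flag (br : V -> V -> V) m (v : 'I_m -> V) (alpha : 'I_m -> form) :=
  [/\ row_free (flagmx v),
      (flagmx v == commutator_sub br)%MS &
      forall (i : 'I_m) (x : V),
        (br x (v i) - ev (alpha i) x *: v i <=
           \matrix_(j < m) (if (j < i)%N then v j else 0))%MS].

Definition in_Omega m (alpha : 'I_m -> form) (a : form) : Prop :=
  exists S : {set 'I_m}, S != set0 /\ a = \sum_(i in S) alpha i.

End LieDefs.

From mathcomp Require Import all_boot all_algebra.
From mathcomp Require Import reals.
From mathcomp Require Import complex.
From Stdlib Require Import Classical.
From mathcomp Require Import zify ring.
Set Implicit Arguments. Unset Strict Implicit. Unset Printing Implicit Defensive.
Import GRing.Theory.
Local Open Scope ring_scope.

(* Let theta = lam *: omega be closed, nonzero, with -theta outside Omega.  Then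
   theta + sum_(i in S) alpha_i <> 0 for every S, so some x in g has
   (theta + sum_(i in S) alpha_i)(x) <> 0 for all S.  The twisted Lie derivative
   L_x = theta(x) + D_x, where D_x is the derivation induced by ad x on cochains, satisfies
   Cartan's formula L_x = d_theta i_x + i_x d_theta and commutes with d_theta; hence for a
   polynomial P and a cocycle f, P(L_x) f is P(0) f plus a coboundary.  Triangularising ad x
   along the flag of [g,g] (weights alpha_i(x)) continued through g (weights 0), D_x is
   killed by the product of (T - r) over all subset sums r of the alpha_i(x).  With
   P(T) = prod_r (T - theta(x) - r) this gives P(L_x) = 0 and P(0) <> 0, so every cocycle
   is exact.  Conversely the constant 1 is a non-exact 0-cocycle for theta = 0. *)

Section RemAt.
Variables (F : fieldType) (n : nat).
Implicit Types (X : seq 'rV[F]_n) (y : 'rV[F]_n).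

Lemma size_rem_at i X : (i < size X)%N -> size (rem_at i X) = (size X).-1.
Proof.
move=> hi; rewrite /rem_at size_cat size_take size_drop hi.
by case: (size X) hi => // s hs; rewrite subSS; lia.
Qed.

Lemma nth_rem_at i X l : nth 0 (rem_at i X) l = nth 0 X (bump i l).
Proof.
rewrite /rem_at nth_cat size_take /bump.
have [hiX|hiX] := ltnP i (size X); have [hli|hli] := ltnP l i => /=.
- by rewrite nth_take.
- by rewrite nth_drop; congr nth; lia.
- case: ltnP => h; first by rewrite nth_take.
  rewrite !nth_default // ?size_drop; lia.
- case: ltnP => h; first by lia.
  rewrite !nth_default // ?size_drop; lia.
Qed.

Lemma rem_at0 y X : rem_at 0 (y :: X) = X.
Proof. by rewrite /rem_at /= drop0. Qed.

Lemma rem_atS j y X : rem_at j.+1 (y :: X) = y :: rem_at j X.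
Proof. by []. Qed.

Lemma size_set_nth_lt X k y : (k < size X)%N -> size (set_nth 0 X k y) = size X.
Proof. by move=> h; rewrite size_set_nth; apply/maxn_idPr. Qed.

Lemma set_nth_idem X i u v : set_nth 0 (set_nth 0 X i u) i v = set_nth 0 X i v.
Proof. by rewrite set_set_nth eqxx. Qed.

Lemma set_nth_comm X i j u v : i != j ->
  set_nth 0 (set_nth 0 X i u) j v = set_nth 0 (set_nth 0 X j v) i u.
Proof. by move=> nij; rewrite set_set_nth (negbTE nij). Qed.

Lemma set_nth_nth X i : (i < size X)%N -> set_nth 0 X i (nth 0 X i) = X.
Proof.
move=> hi; apply: (@eq_from_nth _ 0); first by rewrite size_set_nth_lt.
by move=> p _; rewrite nth_set_nth /=; case: eqP => // ->.
Qed.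

Lemma rem_at_set_nth_bump j l X y : (j < size X)%N -> (l < (size X).-1)%N ->
  rem_at j (set_nth 0 X (bump j l) y) = set_nth 0 (rem_at j X) l y.
Proof.
move=> hj hl.
have hb : (bump j l < size X)%N by rewrite /bump; case: (j <= l)%N; lia.
apply: (@eq_from_nth _ 0).
  by rewrite size_rem_at ?size_set_nth_lt // ?size_rem_at.
move=> p _; rewrite nth_rem_at !nth_set_nth /= nth_rem_at.
by rewrite (inj_eq (can_inj (bumpK j))).
Qed.

Lemma rem_at_set_nth j X y : (j < size X)%N -> rem_at j (set_nth 0 X j y) = rem_at j X.
Proof.
move=> hj; apply: (@eq_from_nth _ 0); first by rewrite !size_rem_at ?size_set_nth_lt.
move=> p _; rewrite !nth_rem_at nth_set_nth /=.
by rewrite /bump; case: (leqP j p) => h /=; case: eqP => //; lia.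
Qed.

End RemAt.

Section AlternatingForms.
Variables (F : fieldType) (n : nat).
Local Notation V := 'rV[F]_n.
Variables (q : nat) (f : seq V -> F).
Hypothesis hf : is_qform q f.

Lemma qform_lin (X : seq V) i c u v : size X = q -> (i < q)%N ->
  f (set_nth 0 X i (c *: u + v)) = c * f (set_nth 0 X i u) + f (set_nth 0 X i v).
Proof. by case: hf => h _; apply: h. Qed.

Lemma qform_add (X : seq V) i u v : size X = q -> (i < q)%N ->
  f (set_nth 0 X i (u + v)) = f (set_nth 0 X i u) + f (set_nth 0 X i v).
Proof. by move=> hs hi; rewrite -{1}(scale1r u) qform_lin // mul1r. Qed.

Lemma qform_set0 (X : seq V) i : size X = q -> (i < q)%N -> f (set_nth 0 X i 0) = 0.
Proof.
move=> hs hi; have := qform_lin (-1) 0 0 hs hi.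
by rewrite scaler0 addr0 mulN1r addNr.
Qed.

Lemma qform_nth0 (X : seq V) i : size X = q -> (i < q)%N -> nth 0 X i = 0 -> f X = 0.
Proof.
move=> hs hi h0; have hiX : (i < size X)%N by rewrite hs.
by rewrite -(set_nth_nth hiX) h0 qform_set0.
Qed.

Lemma qform_alt (X : seq V) i j : size X = q -> (i < q)%N -> (j < q)%N -> i != j ->
  nth 0 X i = nth 0 X j -> f X = 0.
Proof.
case: hf => _ h hs hi hj; case: (ltngtP i j) => // hij _ e.
  by apply: (h X i j) => //; rewrite hij hj.
by apply: (h X j i) => //; rewrite hij hi.
Qed.

Lemma qform_swap (X : seq V) i j : size X = q -> (i < q)%N -> (j < q)%N -> i != j ->
  f (set_nth 0 (set_nth 0 X i (nth 0 X j)) j (nth 0 X i)) = - f X.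
Proof.
move=> hs hi hj hij.
pose Z u v := set_nth 0 (set_nth 0 X i u) j v.
have si u : size (set_nth 0 X i u) = q by rewrite size_set_nth_lt ?hs.
have sj v : size (set_nth 0 X j v) = q by rewrite size_set_nth_lt ?hs.
have ZC u v : Z u v = set_nth 0 (set_nth 0 X j v) i u.
  by rewrite /Z [LHS]set_set_nth ifN.
have Zuu u : f (Z u u) = 0.
  apply: (qform_alt (i := i) (j := j)) => //; first by rewrite /Z size_set_nth_lt si.
  by rewrite ZC !nth_set_nth /= eqxx; case: eqP => // _; rewrite nth_set_nth /= eqxx.
have addl u1 u2 v : f (Z (u1 + u2) v) = f (Z u1 v) + f (Z u2 v).
  by rewrite !ZC qform_add.
have addr u v1 v2 : f (Z u (v1 + v2)) = f (Z u v1) + f (Z u v2).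
  by rewrite /Z qform_add.
have ZX : Z (nth 0 X i) (nth 0 X j) = X by rewrite /Z !set_nth_nth ?si ?hs.
have := Zuu (nth 0 X i + nth 0 X j).
rewrite addl !addr !Zuu add0r addr0 ZX => /eqP.
by rewrite addrC addr_eq0 => /eqP.
Qed.

Lemma qform_vanish_span (A B : V -> Prop) :
  (forall y, B y -> exists c u w, [/\ A u, A w & y = c *: u + w]) ->
  (forall X, size X = q -> (forall m, (m < q)%N -> A (nth 0 X m)) -> f X = 0) ->
  forall X, size X = q -> (forall m, (m < q)%N -> B (nth 0 X m)) -> f X = 0.
Proof.
move=> hBA hA.
suff hj j X : size X = q -> (forall m, (m < j)%N -> (m < q)%N -> B (nth 0 X m)) ->
    (forall m, (j <= m < q)%N -> A (nth 0 X m)) -> f X = 0.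
  by move=> X hs hB; apply: (hj q) => // [m _|m]; [apply: hB | lia].
elim: j X => [|j IH] X hs hB hA'; first by apply: hA => // m hm; apply: hA'.
have [hjq|hjq] := ltnP j q; last by apply: IH => // m hm; [apply: hB; lia | lia].
have hjX : (j < size X)%N by rewrite hs.
have [c [u [w [hu hw ey]]]] := hBA _ (hB j (ltnSn j) hjq).
have hset y : A y -> f (set_nth 0 X j y) = 0.
  move=> hy; apply: IH; first by rewrite size_set_nth_lt.
    move=> m hm hmq; rewrite nth_set_nth /=.
    by case: eqP => [?|_]; [lia | apply: hB => //; lia].
  by move=> m hm; rewrite nth_set_nth /=; case: eqP => [//|nmj]; apply: hA'; lia.
by rewrite -(set_nth_nth hjX) ey qform_lin // !hset // mulr0 addr0.
Qed.

End AlternatingForms.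

Section CochainOps.
Variables (F : fieldType) (n : nat).
Local Notation V := 'rV[F]_n.
Implicit Types (phi : V -> V) (f g : seq V -> F) (X : seq V).

Definition apply_at phi X k := set_nth 0 X k (phi (nth 0 X k)).

Definition der_act phi f : seq V -> F :=
  fun X => \sum_(k < size X) f (apply_at phi X k).

Definition contract (x : V) f : seq V -> F := fun X => f (x :: X).

Definition lie_der (t : F) phi f : seq V -> F := t \*o f \+ der_act phi f.

Definition der_prod phi (s : seq F) f : seq V -> F :=
  foldr (fun r h => der_act phi h \+ (- r) \*o h) f s.

Lemma size_apply_at phi X k : (k < size X)%N -> size (apply_at phi X k) = size X.
Proof. exact: size_set_nth_lt. Qed.

Lemma nth_apply_at phi X k l :
  nth 0 (apply_at phi X k) l = if l == k then phi (nth 0 X k) else nth 0 X l.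
Proof. by rewrite /apply_at nth_set_nth. Qed.

Lemma rem_at_apply_at phi X j : (j < size X)%N -> rem_at j (apply_at phi X j) = rem_at j X.
Proof. exact: rem_at_set_nth. Qed.

Lemma rem_at_apply_at_bump phi X j l : (j < size X)%N -> (l < (size X).-1)%N ->
  rem_at j (apply_at phi X (bump j l)) = apply_at phi (rem_at j X) l.
Proof. by move=> hj hl; rewrite /apply_at rem_at_set_nth_bump // nth_rem_at. Qed.

Lemma rem_at2_apply_at phi X i j : (i < j)%N -> (j < size X)%N ->
  rem_at i (rem_at j (apply_at phi X i)) = rem_at i (rem_at j X).
Proof.
move=> hij hj; have hb : bump j i = i by rewrite /bump leqNgt hij.
have := @rem_at_apply_at_bump phi X j i hj; rewrite hb => -> //; last by lia.
by rewrite rem_at_apply_at // size_rem_at //; lia.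
Qed.

Lemma sum_apply_at_rem_at phi (G : seq V -> F) X j : (j < size X)%N ->
  \sum_(k < size X) G (rem_at j (apply_at phi X k)) =
  G (rem_at j X) + der_act phi G (rem_at j X).
Proof.
move=> hj; rewrite (bigD1_ord (Ordinal hj)) //= rem_at_apply_at //; congr (_ + _).
rewrite /der_act size_rem_at //; apply: eq_bigr => l _.
exact: (congr1 G (rem_at_apply_at_bump phi hj (ltn_ord l))).
Qed.

Lemma der_act_cons phi f a X :
  der_act phi f (a :: X) = f (phi a :: X) + der_act phi (contract a f) X.
Proof. by rewrite /der_act big_ord_recl. Qed.

Lemma qformD q f g : is_qform q f -> is_qform q g -> is_qform q (f \+ g).
Proof.
move=> hf hg; split=> [X i c u v hs hi | X i j hs hij e] /=.
  by rewrite !(qform_lin hf) // !(qform_lin hg) //; ring.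
have [hi hj] : (i < q)%N /\ (j < q)%N by case/andP: hij; lia.
have nij : i != j by case/andP: hij; lia.
by rewrite (qform_alt hf hs hi hj nij e) (qform_alt hg hs hi hj nij e) addr0.
Qed.

Lemma qformMl q c f : is_qform q f -> is_qform q (c \*o f).
Proof.
move=> hf; split=> [X i a u v hs hi | X i j hs hij e] /=.
  by rewrite (qform_lin hf) //; ring.
have [hi hj] : (i < q)%N /\ (j < q)%N by case/andP: hij; lia.
have nij : i != j by case/andP: hij; lia.
by rewrite (qform_alt hf hs hi hj nij e) mulr0.
Qed.

Lemma qform_contract q x f : is_qform q.+1 f -> is_qform q (contract x f).
Proof.
case=> hlin halt; split=> [X i c u v hs hi | X i j hs hij e]; rewrite /contract.
  by have := hlin (x :: X) i.+1 c u v; rewrite /= hs; apply.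
by apply: (halt _ i.+1 j.+1); rewrite /= ?hs.
Qed.

Lemma qform_cons_rem_at q f (Y : seq V) j y : is_qform q f -> size Y = q -> (j < q)%N ->
  f (y :: rem_at j Y) = (-1) ^+ j * f (set_nth 0 Y j y).
Proof.
elim: j q f Y => [|j IH] q f [|z Y] hf hs hj; try by rewrite -hs in hj.
  by rewrite rem_at0 expr0 mul1r.
case: q hf hs hj => // q hf [hs] hj.
have := qform_swap hf (X := [:: y, z & rem_at j Y]) (i := 0) (j := 1).
rewrite /= size_rem_at ?hs // => sw; rewrite -[LHS]opprK -sw //; try lia.
have := IH q (contract z f) Y (qform_contract z hf) hs hj; rewrite /contract => ->.
by rewrite exprS mulN1r mulNr.
Qed.

Section Derivation.
Variable phi : V -> V.
Hypothesis phi_lin : forall (c : F) u v, phi (c *: u + v) = c *: phi u + phi v.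

Lemma lin_map0 : phi 0 = 0.
Proof. by have := phi_lin (-1) 0 0; rewrite scaler0 addr0 scaleN1r addNr. Qed.

Lemma qform_der_act q f : is_qform q f -> is_qform q (der_act phi f).
Proof.
move=> hf; split.
  move=> X i c u v hs hi; rewrite /der_act !size_set_nth_lt ?hs //.
  rewrite mulr_sumr -big_split /=; apply: eq_bigr => k _.
  rewrite /apply_at !nth_set_nth /=; have [<-|nik] := eqVneq i (k : nat).
    by rewrite !set_nth_idem phi_lin (qform_lin hf).
  by rewrite !(set_nth_comm _ _ _ nik) (qform_lin hf) // size_set_nth_lt ?hs.
move=> X a b hs hab e; rewrite /der_act.
have [ha hb] : (a < size X)%N /\ (b < size X)%N by case/andP: hab; lia.
have nab : a != b by case/andP: hab; lia.
have sU k : (k < size X)%N -> size (apply_at phi X k) = q by move=> /size_apply_at ->.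
rewrite (bigD1 (Ordinal ha)) // (bigD1 (Ordinal hb)) /=; last by rewrite -val_eqE /= eq_sym.
rewrite big1 ?addr0 => [|k /andP [na nb]]; last first.
  apply: (qform_alt hf (i := a) (j := b)); rewrite ?sU -?hs //.
  have [nak nbk] : a != k /\ b != k.
    by split; [move: na | move: nb]; apply: contra => /eqP e'; rewrite -val_eqE /= e'.
  by rewrite !nth_apply_at (negbTE nak) (negbTE nbk).
have -> : apply_at phi X b = set_nth 0 (set_nth 0 (apply_at phi X a) a
             (nth 0 (apply_at phi X a) b)) b (nth 0 (apply_at phi X a) a).
  apply: (@eq_from_nth _ 0); first by rewrite !size_set_nth_lt ?size_apply_at.
  move=> p _; rewrite !nth_set_nth /= eqxx (eq_sym b) (negbTE nab).
  case: eqP => _; first by rewrite e.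
  by rewrite nth_set_nth /= nth_apply_at; case: eqP => [->|].
by rewrite (qform_swap hf) ?sU -?hs // addrN.
Qed.

Lemma qform_lie_der q t f : is_qform q f -> is_qform q (lie_der t phi f).
Proof. by move=> hf; apply: qformD; [apply: qformMl | apply: qform_der_act]. Qed.

Lemma qform_der_prod q s f : is_qform q f -> is_qform q (der_prod phi s f).
Proof.
move=> hf; elim: s => [|r s IH] //=.
by apply: qformD; [apply: qform_der_act | apply: qformMl].
Qed.

End Derivation.
End CochainOps.

Lemma signS2 (R : pzRingType) k : (-1) ^+ k.+2 = (-1) ^+ k :> R.
Proof. by rewrite !exprS mulN1r mulN1r opprK. Qed.

Section CartanFormula.
Variables (F : fieldType) (n : nat).
Local Notation V := 'rV[F]_n.
Variables (br : V -> V -> V) (th : 'cV[F]_n).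

Lemma dtw_cons (f : seq V -> F) (x : V) (X : seq V) :
  dtw br th f (x :: X) =
    \sum_(j < size X) ((-1) ^+ j * f (br x (nth 0 X j) :: rem_at j X) +
      \sum_(i < j) (-1) ^+ (i + j + 1)%N * f (br (nth 0 X i) (nth 0 X j)
        :: x :: rem_at i (rem_at j X)))
    + (ev th x * f X - \sum_(i < size X) (-1) ^+ i * ev th (nth 0 X i) * f (x :: rem_at i X)).
Proof.
rewrite /dtw; congr (_ + _).
  rewrite /= big_ord_recl big_ord0 add0r; apply: eq_bigr => j _.
  have b0 k : bump 0 k = k.+1 by [].
  rewrite big_ord_recl /= !b0 !add0n; congr (_ + _).
    by rewrite addn1 signS2 rem_atS rem_at0.
  apply: eq_bigr => i _; rewrite !b0.
  have -> : (i.+1 + j.+1 + 1 = (i + j + 1).+2)%N by lia.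
  by rewrite signS2 rem_atS rem_atS.
rewrite /= big_ord_recl /= expr0 mul1r rem_at0; congr (_ + _).
rewrite -sumrN; apply: eq_bigr => i _.
by rewrite /bump /= add1n exprS rem_atS !mulN1r !mulNr.
Qed.

Lemma cartan_formula q (f : seq V -> F) (x : V) (X : seq V) : is_qform q f -> size X = q ->
  dtw br th (contract x f) X + dtw br th f (x :: X) = lie_der (ev th x) (br x) f X.
Proof.
move=> hf hs.
rewrite dtw_cons /dtw /contract /lie_der /der_act /=.
match goal with |- ?A + ?B + (?C + (?D - ?B)) = ?D + ?M =>
  suff key : A + C = M by rewrite -key; ring end.
rewrite -big_split /=; apply: eq_bigr => j _.
rewrite addrCA -big_split /= big1 ?addr0.
  by rewrite (qform_cons_rem_at _ hf) -?hs // mulrA -expr2 sqrr_sign mul1r.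
move=> i _; rewrite -mulrDr.
have hi : (i < size X)%N by apply: ltn_trans (ltn_ord i) _.
have sR : size (rem_at i (rem_at j X)) = (size X).-2.
  have sj : size (rem_at j X) = (size X).-1 by apply: size_rem_at.
  by rewrite size_rem_at sj //; have := ltn_ord i; have := ltn_ord j; lia.
have := qform_swap hf (X := [:: x, br (nth 0 X i) (nth 0 X j) & rem_at i (rem_at j X)])
  (i := 0) (j := 1).
have X2 : (1 < size X)%N by have := ltn_ord i; have := ltn_ord j; lia.
rewrite /= sR -hs => -> //; try lia.
by rewrite subrr mulr0.
Qed.

End CartanFormula.

Lemma sum_eq_single (R : nmodType) (I : finType) (D : I -> R) (i : I) :
  (forall k, k != i -> D k = 0) -> \sum_k D k = D i.
Proof. by move=> h; rewrite (bigD1 i) //= big1 ?addr0. Qed.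

Lemma sum_eq_pair (R : nmodType) (I : finType) (D : I -> R) (i j : I) : i != j ->
  (forall k, k != i -> k != j -> D k = 0) -> \sum_k D k = D i + D j.
Proof.
move=> nij h; rewrite (bigD1 i) // (bigD1 j) /=; last by rewrite eq_sym.
by rewrite big1 ?addr0 // => k /andP [] a b; apply: h.
Qed.

Section LieBracket.
Variables (F : fieldType) (n : nat).
Local Notation V := 'rV[F]_n.
Variable br : V -> V -> V.
Hypothesis hbr : is_lie_bracket br.

Lemma lie_linl c u v w : br (c *: u + v) w = c *: br u w + br v w.
Proof. by case: hbr. Qed.

Lemma lie_linr c u v w : br w (c *: u + v) = c *: br w u + br w v.
Proof. by case: hbr. Qed.

Lemma lie_addl u v w : br (u + v) w = br u w + br v w.
Proof. by rewrite -{1}(scale1r u) lie_linl scale1r. Qed.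

Lemma lie_addr u v w : br w (u + v) = br w u + br w v.
Proof. by rewrite -{1}(scale1r u) lie_linr scale1r. Qed.

Lemma lie0l w : br 0 w = 0.
Proof. exact: (lin_map0 (fun c u v => lie_linl c u v w)). Qed.

Lemma lie0r w : br w 0 = 0.
Proof. exact: (lin_map0 (fun c u v => lie_linr c u v w)). Qed.

Lemma lie_anti u v : br u v = - br v u.
Proof.
case: hbr => _ _ hal _; have := hal (u + v).
by rewrite lie_addl !lie_addr !hal add0r addr0 => /eqP; rewrite addr_eq0 => /eqP.
Qed.

Lemma lie_oppr u w : br w (- u) = - br w u.
Proof. by have := lie_linr (-1) u 0 w; rewrite addr0 lie0r addr0 !scaleN1r. Qed.

Lemma lie_jacobi_der x a b : br x (br a b) = br (br x a) b + br a (br x b).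
Proof.
case: hbr => _ _ _ hj; have := hj x a b.
rewrite (lie_anti b x) lie_oppr (lie_anti b (br x a)) => /eqP.
by rewrite -addrA addr_eq0 => /eqP ->; rewrite opprD !opprK addrC.
Qed.

End LieBracket.

Section LieDerivative.
Variables (F : fieldType) (n : nat).
Local Notation V := 'rV[F]_n.
Variables (br : V -> V -> V) (th : 'cV[F]_n) (x : V).
Hypothesis hbr : is_lie_bracket br.
Hypothesis hth : closed_form br th.
Local Notation phi := (br x).

Lemma der_act_dtw_pair p g (X : seq V) (i j : nat) : is_qform p g -> size X = p.+1 ->
  (i < j)%N -> (j < size X)%N ->
  \sum_(k < size X) g (br (nth 0 (apply_at phi X k) i) (nth 0 (apply_at phi X k) j)
                        :: rem_at i (rem_at j (apply_at phi X k)))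
  = der_act phi g (br (nth 0 X i) (nth 0 X j) :: rem_at i (rem_at j X)).
Proof.
move=> hg hs hij hj.
have hi : (i < size X)%N by apply: ltn_trans hj.
set a := br (nth 0 X i) (nth 0 X j).
set R := rem_at i (rem_at j X).
have sj : size (rem_at j X) = (size X).-1 by apply: size_rem_at.
have hi' : (i < size (rem_at j X))%N by rewrite sj; lia.
have saR : size (a :: R) = p by rewrite /= /R size_rem_at // sj hs; lia.
have gadd u v : g ((u + v) :: R) = g (u :: R) + g (v :: R).
  have p0 : (0 < p)%N by lia.
  exact: (qform_add hg u v saR p0).
rewrite der_act_cons lie_jacobi_der // gadd.
pose U (k : 'I_(size X)) := g (a :: rem_at i (rem_at j (apply_at phi X k))).
pose D (k : 'I_(size X)) := g (br (nth 0 (apply_at phi X k) i) (nth 0 (apply_at phi X k) j)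
                        :: rem_at i (rem_at j (apply_at phi X k))) - U k.
rewrite (eq_bigr (fun k => U k + D k)); last by move=> k _; rewrite /D addrC subrK.
rewrite big_split /=.
have -> : \sum_(k < size X) U k = g (a :: R) + (g (a :: R) + der_act phi (contract a g) R).
  rewrite /U (sum_apply_at_rem_at phi (fun Y => g (a :: rem_at i Y))) //; congr (_ + _).
  exact: (sum_apply_at_rem_at phi (contract a g) hi').
rewrite (sum_eq_pair (i := Ordinal hi) (j := Ordinal hj)); first last.
- move=> k nki nkj; rewrite /D /U !nth_apply_at.
  have [nik njk] : i != k /\ j != k.
    by split; [move: nki | move: nkj]; apply: contra => /eqP e'; rewrite -val_eqE /= e'.
  by rewrite (negbTE nik) (negbTE njk) subrr.
- by rewrite -val_eqE /= neq_ltn hij.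
rewrite /D /U /= !nth_apply_at eqxx.
have -> : (j == i) = false by lia.
have -> : (i == j) = false by lia.
rewrite rem_at2_apply_at // rem_at_apply_at // -/R eqxx.
ring.
Qed.

Lemma der_act_dtw_single (g : seq V -> F) (X : seq V) (i : nat) : (i < size X)%N ->
  \sum_(k < size X) ev th (nth 0 (apply_at phi X k) i) * g (rem_at i (apply_at phi X k))
  = ev th (nth 0 X i) * der_act phi g (rem_at i X).
Proof.
move=> hi.
pose U (k : 'I_(size X)) := ev th (nth 0 X i) * g (rem_at i (apply_at phi X k)).
pose D (k : 'I_(size X)) :=
  ev th (nth 0 (apply_at phi X k) i) * g (rem_at i (apply_at phi X k)) - U k.
rewrite (eq_bigr (fun k => U k + D k)); last by move=> k _; rewrite /D addrC subrK.
rewrite big_split /= /U -mulr_sumr (sum_apply_at_rem_at phi g) //.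
rewrite (sum_eq_single (i := Ordinal hi)); last first.
  move=> k nk; rewrite /D /U nth_apply_at.
  have nik : i != k by move: nk; apply: contra => /eqP e'; rewrite -val_eqE /= e'.
  by rewrite (negbTE nik) subrr.
rewrite /D /U /= nth_apply_at eqxx hth rem_at_apply_at //.
ring.
Qed.

Lemma dtw_lie_der p g (X : seq V) : is_qform p g -> size X = p.+1 ->
  dtw br th (lie_der (ev th x) phi g) X = lie_der (ev th x) phi (dtw br th g) X.
Proof.
move=> hg hs.
have Hpair : \sum_(k < size X) \sum_(j < size (apply_at phi X k)) \sum_(i < j)
     (-1) ^+ (i + j + 1)%N * g (br (nth 0 (apply_at phi X k) i) (nth 0 (apply_at phi X k) j)
        :: rem_at i (rem_at j (apply_at phi X k)))
   = \sum_(j < size X) \sum_(i < j) (-1) ^+ (i + j + 1)%N *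
      der_act phi g (br (nth 0 X i) (nth 0 X j) :: rem_at i (rem_at j X)).
  transitivity (\sum_(k < size X) \sum_(j < size X) \sum_(i < j)
     (-1) ^+ (i + j + 1)%N * g (br (nth 0 (apply_at phi X k) i) (nth 0 (apply_at phi X k) j)
        :: rem_at i (rem_at j (apply_at phi X k)))).
    by apply: eq_bigr => k _; rewrite size_apply_at.
  rewrite exchange_big; apply: eq_bigr => j _; rewrite exchange_big.
  apply: eq_bigr => i _; rewrite -mulr_sumr; congr (_ * _).
  exact: (der_act_dtw_pair hg hs (ltn_ord i) (ltn_ord j)).
have Hsingle : \sum_(k < size X) \sum_(i < size (apply_at phi X k))
     (-1) ^+ i * ev th (nth 0 (apply_at phi X k) i) * g (rem_at i (apply_at phi X k))
   = \sum_(i < size X) (-1) ^+ i * ev th (nth 0 X i) * der_act phi g (rem_at i X).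
  transitivity (\sum_(k < size X) \sum_(i < size X)
     (-1) ^+ i * ev th (nth 0 (apply_at phi X k) i) * g (rem_at i (apply_at phi X k))).
    by apply: eq_bigr => k _; rewrite size_apply_at.
  rewrite exchange_big; apply: eq_bigr => i _.
  under eq_bigr => k _ do rewrite -mulrA.
  by rewrite -mulr_sumr der_act_dtw_single // mulrA.
rewrite {2}/lie_der /= /der_act /dtw big_split /= Hpair Hsingle.
rewrite mulrDr addrACA; congr (_ + _).
  rewrite mulr_sumr -big_split; apply: eq_bigr => j _ /=.
  by rewrite mulr_sumr -big_split; apply: eq_bigr => i _ /=; rewrite /lie_der /=; ring.
by rewrite mulr_sumr -big_split; apply: eq_bigr => i _ /=; rewrite /lie_der /=; ring.
Qed.

End LieDerivative.

Section Homotopy.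
Variables (F : fieldType) (n : nat).
Local Notation V := 'rV[F]_n.
Variables (br : V -> V -> V) (th : 'cV[F]_n).

Lemma dtw_add (g1 g2 : seq V -> F) X :
  dtw br th (g1 \+ g2) X = dtw br th g1 X + dtw br th g2 X.
Proof.
rewrite /dtw /= [RHS]addrACA; congr (_ + _); rewrite -big_split; apply: eq_bigr => j _ /=.
  by rewrite -big_split; apply: eq_bigr => i _ /=; ring.
ring.
Qed.

Lemma dtw_mull c (g : seq V -> F) X : dtw br th (c \*o g) X = c * dtw br th g X.
Proof.
rewrite /dtw /= mulrDr !mulr_sumr; congr (_ + _); apply: eq_bigr => j _ /=.
  by rewrite mulr_sumr; apply: eq_bigr => i _ /=; ring.
ring.
Qed.

Variable x : V.
Hypothesis hbr : is_lie_bracket br.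
Hypothesis hth : closed_form br th.
Local Notation phi := (br x).
Local Notation t := (ev th x).

Lemma der_prod_cocycle q (f : seq V -> F) s : is_qform q.+1 f -> cocycle br th q.+1 f ->
  exists g, is_qform q g /\ forall X, size X = q.+1 ->
    der_prod phi s f X = (\prod_(r <- s) - (t + r)) * f X + dtw br th g X.
Proof.
move=> hf hcf; elim: s => [|r s [g [hg IH]]].
  exists (0 \*o contract x f); split; first by apply/qformMl/qform_contract.
  by move=> X _; rewrite dtw_mull big_nil mul0r mul1r addr0.
pose c := \prod_(r <- s) - (t + r).
exists (c \*o contract x f \+ lie_der t phi g \+ (- (t + r)) \*o g); split.
  apply: qformD; last exact: qformMl.
  apply: qformD; first by apply/qformMl/qform_contract.
  by apply: qform_lie_der => //; exact: (fun c u v => lie_linr hbr c u v x).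
move=> X hs.
have hMs : der_act phi (der_prod phi s f) X = c * der_act phi f X + der_act phi (dtw br th g) X.
  rewrite /der_act mulr_sumr -big_split; apply: eq_bigr => k _ /=.
  by rewrite IH // size_apply_at.
have hMf : der_act phi f X = dtw br th (contract x f) X - t * f X.
  have := cartan_formula br th x hf hs.
  rewrite (hcf (x :: X)) /= ?hs // addr0 => ->; rewrite /lie_der /=; ring.
have hMg : der_act phi (dtw br th g) X = dtw br th (lie_der t phi g) X - t * dtw br th g X.
  by rewrite (dtw_lie_der x hbr hth hg hs) /lie_der /=; ring.
rewrite /= hMs IH // big_cons hMf hMg !dtw_add !dtw_mull -/c; ring.
Qed.

Lemma coboundary_of_der_prod q (f : seq V -> F) s :
  is_qform q.+1 f -> cocycle br th q.+1 f ->
  \prod_(r <- s) - (t + r) != 0 ->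
  (forall X, size X = q.+1 -> der_prod phi s f X = 0) ->
  coboundary br th q.+1 f.
Proof.
move=> hf hcf hc hz; have [g [hg E]] := der_prod_cocycle s hf hcf.
exists (- (\prod_(r <- s) - (t + r))^-1 \*o g); split; first exact: qformMl.
move=> X hs; rewrite dtw_mull.
have := E X hs; rewrite hz // => /esym/eqP; rewrite addr_eq0 => /eqP e.
by apply: (mulfI hc); rewrite e mulNr mulrN mulrA mulfV // mul1r.
Qed.

End Homotopy.

Section TriangularAction.
Variables (F : fieldType) (n : nat).
Local Notation V := 'rV[F]_n.
Variables (phi : V -> V) (b : nat -> V) (lam : nat -> F).
Hypothesis phi_lin : forall (c : F) u v, phi (c *: u + v) = c *: phi u + phi v.

Fixpoint in_flag (k : nat) (y : V) : Prop :=
  if k is k'.+1 then exists c w, in_flag k' w /\ y = w + c *: b k' else y = 0.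

Lemma in_flag0 k : in_flag k 0.
Proof. by elim: k => [|k IH] //=; exists 0, 0; rewrite scale0r addr0. Qed.

Lemma in_flag_lin k c u w : in_flag k u -> in_flag k w -> in_flag k (c *: u + w).
Proof.
elim: k u w => [|k IH] u w /=; first by move=> -> ->; rewrite scaler0 addr0.
move=> [c1 [w1 [h1 ->]]] [c2 [w2 [h2 ->]]].
exists (c * c1 + c2), (c *: w1 + w2); split; first exact: IH.
by rewrite scalerDr scalerA scalerDl addrACA.
Qed.

Lemma in_flag_add k u w : in_flag k u -> in_flag k w -> in_flag k (u + w).
Proof. by move=> hu hw; rewrite -(scale1r u); apply: in_flag_lin. Qed.

Lemma in_flag_scale k c u : in_flag k u -> in_flag k (c *: u).
Proof. by move=> hu; rewrite -(addr0 (c *: u)); apply: in_flag_lin => //; apply: in_flag0. Qed.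

Lemma in_flag_sum k (I : finType) (P : pred I) (c : I -> F) (u : I -> V) :
  (forall i, P i -> in_flag k (u i)) -> in_flag k (\sum_(i | P i) c i *: u i).
Proof.
move=> hu; apply: (big_ind (in_flag k)); [exact: in_flag0 | exact: in_flag_add |].
by move=> i /hu; apply: in_flag_scale.
Qed.

Lemma in_flagS k y : in_flag k y -> in_flag k.+1 y.
Proof. by move=> h; exists 0, y; rewrite scale0r addr0. Qed.

Lemma in_flag_le k k' y : (k <= k')%N -> in_flag k y -> in_flag k' y.
Proof.
move=> /subnK <-; elim: (k' - k)%N => [|d IH] // h.
by rewrite addSn; apply: in_flagS; apply: IH.
Qed.

Lemma in_flag_basis k : in_flag k.+1 (b k).
Proof. by exists 1, 0; rewrite add0r scale1r; split => //; apply: in_flag0. Qed.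

Hypothesis phi_triangular : forall k, in_flag k (phi (b k) - lam k *: b k).

Lemma in_flag_phi k y : in_flag k y -> in_flag k (phi y).
Proof.
elim: k y => [|k IH] y /=; first by move=> ->; apply: lin_map0.
move=> [c [w [hw ->]]]; rewrite addrC phi_lin.
have -> : c *: phi (b k) + phi w =
    (c *: (phi (b k) - lam k *: b k) + phi w) + (c * lam k) *: b k.
  by rewrite scalerBr scalerA addrAC subrK.
have [c' [w' [hw' ->]]] : in_flag k.+1 (c *: (phi (b k) - lam k *: b k) + phi w).
  by apply: in_flag_lin; apply: in_flagS => //; apply: IH.
by exists (c' + c * lam k), w'; rewrite -addrA -scalerDl.
Qed.

Definition all_in_flag k (X : seq V) := forall m, (m < size X)%N -> in_flag k (nth 0 X m).

Lemma all_in_flag_apply_at k X l : all_in_flag k X -> all_in_flag k (apply_at phi X l).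
Proof.
move=> h m hm; rewrite nth_apply_at.
have [e|ne] := eqVneq m l; last first.
  by have [hl|hl] := ltnP m (size X); [apply: h | rewrite nth_default //; apply: in_flag0].
have [hl|hl] := ltnP l (size X); first by apply/in_flag_phi/h.
by rewrite nth_default // lin_map0 //; apply: in_flag0.
Qed.

Lemma der_prod_vanish k q s h : (forall Y, size Y = q -> all_in_flag k Y -> h Y = 0) ->
  forall Y, size Y = q -> all_in_flag k Y -> der_prod phi s h Y = 0.
Proof.
move=> h0; elim: s => [|r s IH] Y hs hY //=; first exact: h0.
rewrite /der_act IH // mulr0 addr0 big1 // => l _.
by apply: IH; [rewrite size_apply_at // hs | exact: all_in_flag_apply_at].
Qed.

Lemma contract_der_prod k q s h : is_qform q.+1 h ->
  (forall Y, size Y = q.+1 -> all_in_flag k Y -> h Y = 0) ->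
  forall Y, size Y = q -> all_in_flag k Y ->
  contract (b k) (der_prod phi [seq r + lam k | r <- s] h) Y =
  der_prod phi s (contract (b k) h) Y.
Proof.
move=> hh h0; elim: s => [|r s IH] Y hs hY //=.
set H := der_prod phi [seq r0 + lam k | r0 <- s] h.
have hH : is_qform q.+1 H by apply: qform_der_prod.
have sbY : size (b k :: Y) = q.+1 by rewrite /= hs.
have hHb : der_act phi H (b k :: Y) =
    lam k * H (b k :: Y) + der_act phi (contract (b k) H) Y.
  rewrite der_act_cons; congr (_ + _).
  set r0 := phi (b k) - lam k *: b k.
  have -> : phi (b k) = lam k *: b k + r0 by rewrite addrC subrK.
  have := qform_lin hH (lam k) (b k) r0 sbY (ltn0Sn q); rewrite /= => ->.
  rewrite [H (r0 :: Y)](der_prod_vanish _ h0) ?addr0 // => -[|m] hm /=.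
    exact: phi_triangular.
  exact: hY.
have hHY : der_act phi (contract (b k) H) Y = der_act phi (der_prod phi s (contract (b k) h)) Y.
  apply: eq_bigr => l _; apply: IH; first by rewrite size_apply_at // hs.
  exact: all_in_flag_apply_at.
rewrite /contract /= -/H hHb hHY -(IH Y hs hY) /contract -/H; ring.
Qed.

Lemma qform_vanish_flagS k q h : is_qform q h ->
  (forall Y, size Y = q -> all_in_flag k Y -> h Y = 0) ->
  (forall Y, size Y = q.-1 -> all_in_flag k Y -> h (b k :: Y) = 0) ->
  forall X, size X = q -> all_in_flag k.+1 X -> h X = 0.
Proof.
move=> hh h0 h1 X hs; rewrite /all_in_flag hs => hX.
apply: (qform_vanish_span hh (A := fun y => in_flag k y \/ y = b k) (B := in_flag k.+1)) hs hX.
  by move=> y [c [w [hw ->]]]; exists c, (b k), w; rewrite addrC; split; [right | left |].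
move=> {}X {}hs {}hX.
case: (classic (exists j, (j < q)%N /\ ~ in_flag k (nth 0 X j))); last first.
  move=> hnone; apply: h0 => // m hm; apply: NNPP => hm'.
  by apply: hnone; exists m; rewrite -hs.
move=> [j [hj nj]]; have ej : nth 0 X j = b k by case: (hX j hj).
case: (classic (exists j', [/\ (j' < q)%N, j' != j & ~ in_flag k (nth 0 X j')])).
  move=> [j' [hj' nj'j nj']]; have ej' : nth 0 X j' = b k by case: (hX j' hj').
  by apply: (qform_alt hh hs hj' hj nj'j); rewrite ej ej'.
move=> hnone; have hjX : (j < size X)%N by rewrite hs.
have := qform_cons_rem_at (b k) hh hs hj; rewrite -ej set_nth_nth // ej h1.
- by move=> /esym/eqP; rewrite mulf_eq0 signr_eq0 => /eqP.
- by rewrite size_rem_at // hs.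
move=> m; rewrite size_rem_at // hs nth_rem_at => hm; apply: NNPP => nm.
have [hbq hbj] : (bump j m < q)%N /\ bump j m != j.
  by rewrite /bump; case: (leqP j m) => hjm /=; split; lia.
by apply: hnone; exists (bump j m).
Qed.

Fixpoint subset_sums k : seq F :=
  if k is k'.+1 then [seq r + lam k' | r <- subset_sums k'] ++ subset_sums k' else [:: 0].

Lemma der_prod_subset_sums k q f : is_qform q f ->
  forall X, size X = q -> all_in_flag k X -> der_prod phi (subset_sums k) f X = 0.
Proof.
elim: k q f => [|k IH] q f hf X hs hX.
  rewrite /= oppr0 mul0r addr0 /der_act big1 // => l _.
  apply: (qform_nth0 hf (i := l)); rewrite ?size_apply_at -?hs //.
  by rewrite nth_apply_at eqxx (hX l (ltn_ord l)) lin_map0.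
rewrite /= /der_prod foldr_cat -/(der_prod phi (subset_sums k) f).
set f' := der_prod phi (subset_sums k) f.
have hf' : is_qform q f' by apply: qform_der_prod.
have f'0 Y : size Y = q -> all_in_flag k Y -> f' Y = 0 by apply: IH.
case: q hf hs hf' f'0 => [|q] hf hs hf' f'0.
  by apply: (der_prod_vanish _ f'0) => // m; rewrite hs.
apply: (qform_vanish_flagS (qform_der_prod _ _ hf') (der_prod_vanish _ f'0)) => // Y hY hYk.
rewrite -/(contract (b k) _ Y) (contract_der_prod _ hf' f'0) //.
exact: (IH q _ (qform_contract _ hf')).
Qed.

End TriangularAction.

Section LinearForms.
Variables (F : fieldType) (n : nat).
Implicit Types (a : 'cV[F]_n) (u w : 'rV[F]_n).

Lemma evDf a1 a2 u : ev (a1 + a2) u = ev a1 u + ev a2 u.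
Proof. by rewrite /ev mulmxDr mxE. Qed.

Lemma evZf c a u : ev (c *: a) u = c * ev a u.
Proof. by rewrite /ev -scalemxAr mxE. Qed.

Lemma ev0f u : ev 0 u = 0.
Proof. by rewrite /ev mulmx0 mxE. Qed.

Lemma ev_sumf (I : finType) (P : pred I) (a : I -> 'cV[F]_n) u :
  ev (\sum_(i | P i) a i) u = \sum_(i | P i) ev (a i) u.
Proof. by rewrite /ev mulmx_sumr summxE. Qed.

Lemma evDv a u w : ev a (u + w) = ev a u + ev a w.
Proof. by rewrite /ev mulmxDl mxE. Qed.

Lemma evZv a c u : ev a (c *: u) = c * ev a u.
Proof. by rewrite /ev -scalemxAl mxE. Qed.

End LinearForms.

Lemma exists_notin_seq (F : numDomainType) (l : seq F) : exists s : F, s \notin l.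
Proof.
pose S := [seq i%:R | i <- iota 0 (size l).+1] : seq F.
have uS : uniq S.
  by rewrite map_inj_uniq ?iota_uniq // => i j /eqP; rewrite Num.Theory.eqr_nat => /eqP.
case: (boolP (all (mem l) S)) => [/allP hall|/allPn [s _ hs]]; last by exists s.
by have := uniq_leq_size uS hall; rewrite size_map size_iota ltnn.
Qed.

Lemma exists_vec_forms_neq0 (F : numFieldType) (n : nat) (cs : seq 'cV[F]_n) :
  (forall c, c \in cs -> c != 0) -> exists x : 'rV[F]_n, forall c, c \in cs -> ev c x != 0.
Proof.
elim: cs => [|c cs IH] hcs; first by exists 0.
have [x hx] : exists x : 'rV[F]_n, forall c', c' \in cs -> ev c' x != 0.
  by apply: IH => c' h; apply: hcs; rewrite inE h orbT.
have [i hi] : exists i, c i 0 != 0.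
  have /eqP/matrixP : c != 0 by apply: hcs; rewrite inE eqxx.
  case: (pickP (fun i => c i 0 != 0)) => [i h _|h ne]; first by exists i.
  by case: ne => i j; rewrite (ord1 j) mxE; apply/eqP/negbFE/h.
pose y : 'rV[F]_n := delta_mx 0 i.
have hy : ev c y = c i 0 by rewrite /ev /y -rowE mxE.
have [s hs] := exists_notin_seq [seq - ev c' x / ev c' y | c' <- c :: cs].
exists (x + s *: y) => c' hc'; rewrite evDv evZv; apply/eqP => e.
have ey : ev c' y != 0.
  move: hc'; rewrite inE => /orP [/eqP ->|hc']; first by rewrite hy.
  by apply: contra (hx c' hc') => /eqP e'; rewrite -e e' mulr0 addr0.
case/negP: hs; apply/mapP; exists c' => //.
have e2 : s * ev c' y = - ev c' x by apply/eqP; rewrite -addr_eq0 addrC e.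
by rewrite -e2 mulfK.
Qed.

Section Vanishing.
Variables (F : fieldType) (n : nat).
Local Notation V := 'rV[F]_n.
Variables (br : V -> V -> V) (m : nat) (v : 'I_m -> V) (alpha : 'I_m -> 'cV[F]_n).
Variables (th : 'cV[F]_n) (x : V).
Hypothesis hbr : is_lie_bracket br.
Hypothesis hflag : lie_flag br v alpha.
Hypothesis hth : closed_form br th.

(* The flag of [g,g] extended to all of g by the standard basis: ad x maps g into [g,g], so
   the added steps have weight 0. *)
Definition flag_basis (j : nat) : V :=
  if insub j is Some i then v i else \row_(l < n) ((j - m)%N == l)%:R.

Definition flag_weight (j : nat) : F :=
  if insub j is Some i then ev (alpha i) x else 0.

Local Notation in_flag := (in_flag flag_basis).

Lemma flag_basis_lt (i : 'I_m) : flag_basis i = v i.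
Proof. by rewrite /flag_basis valK. Qed.

Lemma flag_weight_lt (i : 'I_m) : flag_weight i = ev (alpha i) x.
Proof. by rewrite /flag_weight valK. Qed.

Lemma flag_basis_ge j : (m <= j)%N -> flag_basis j = \row_(l < n) ((j - m)%N == l)%:R.
Proof. by move=> h; rewrite /flag_basis insubF // ltnNge h. Qed.

Lemma flag_weight_ge j : (m <= j)%N -> flag_weight j = 0.
Proof. by move=> h; rewrite /flag_weight insubF // ltnNge h. Qed.

Lemma in_flag_submx k p (A : 'M[F]_(p, n)) (y : V) :
  (forall i, in_flag k (row i A)) -> (y <= A)%MS -> in_flag k y.
Proof. by move=> hA /submxP [u ->]; rewrite mulmx_sum_row; apply: in_flag_sum. Qed.

Lemma in_flag_v (i : 'I_m) k : (i < k)%N -> in_flag k (v i).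
Proof. by move=> h; rewrite -flag_basis_lt; apply: (in_flag_le h); apply: in_flag_basis. Qed.

Lemma lie_sub_commutator u w : (br u w <= commutator_sub br)%MS.
Proof.
have hbase i j : (br (row i 1%:M) (row j 1%:M) <= commutator_sub br)%MS.
  by apply: (sumsmx_sup i) => //; apply: (sumsmx_sup j) => //; rewrite genmxE.
have hrow j u' : (br u' (row j 1%:M) <= commutator_sub br)%MS.
  rewrite -(mulmx1 u') mulmx_sum_row.
  apply: (big_ind (fun z => br z (row j 1%:M) <= commutator_sub br)%MS).
  - by rewrite lie0l // sub0mx.
  - by move=> a b' ha hb'; rewrite lie_addl // addmx_sub.
  - move=> i _; have := lie_linl hbr (u' 0 i) (row i 1%:M) 0 (row j 1%:M).
    by rewrite addr0 lie0l // addr0 => ->; apply: scalemx_sub.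
rewrite -(mulmx1 w) mulmx_sum_row.
apply: (big_ind (fun z => br u z <= commutator_sub br)%MS).
- by rewrite lie0r // sub0mx.
- by move=> a b' ha hb'; rewrite lie_addr // addmx_sub.
- move=> j _; have := lie_linr hbr (w 0 j) (row j 1%:M) 0 u.
  by rewrite addr0 lie0r // addr0 => ->; apply: scalemx_sub.
Qed.

Lemma in_flag_lie u w : in_flag m (br u w).
Proof.
case: hflag => _ /andP [_ hcomm] _.
apply: (in_flag_submx (A := flagmx v)); last exact: submx_trans (lie_sub_commutator u w) hcomm.
by move=> i; rewrite rowK; apply: in_flag_v.
Qed.

Lemma flag_triangular k : in_flag k (br x (flag_basis k) - flag_weight k *: flag_basis k).
Proof.
case: (ltnP k m) => hk; last first.
  by rewrite flag_weight_ge // scale0r subr0; apply: (in_flag_le hk); apply: in_flag_lie.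
have := flag_basis_lt (Ordinal hk); have := flag_weight_lt (Ordinal hk); rewrite /= => -> ->.
case: hflag => _ _ /(_ (Ordinal hk) x); apply: in_flag_submx => j.
by rewrite rowK; case: ifP => hj; [apply: in_flag_v | apply: in_flag0].
Qed.

Lemma in_flag_all (y : V) : in_flag (m + n) y.
Proof.
rewrite -(mulmx1 y) mulmx_sum_row; apply: in_flag_sum => l _.
have -> : row l 1%:M = flag_basis (m + l).
  by rewrite flag_basis_ge ?leq_addr //; apply/rowP => l'; rewrite !mxE addKn.
by apply: (in_flag_le (k := (m + l).+1)); [rewrite -addnS leq_add2l | apply: in_flag_basis].
Qed.

Lemma subset_sums_flag_weight k r : r \in subset_sums flag_weight k ->
  exists2 T : {set 'I_m}, {in T, forall i : 'I_m, i < k}%N & r = \sum_(i in T) ev (alpha i) x.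
Proof.
elim: k r => [|k IH] r /=.
  by rewrite inE => /eqP ->; exists set0; rewrite ?big_set0 // => i; rewrite inE.
rewrite mem_cat => /orP [/mapP [r' /IH [T hT ->] ->]|/IH [T hT ->]]; last first.
  by exists T => // i /hT /ltnW.
case: (ltnP k m) => hk; last first.
  by exists T; [move=> i /hT /ltnW | rewrite flag_weight_ge // addr0].
have hkT : Ordinal hk \notin T by apply/negP => /hT; rewrite ltnn.
have -> : flag_weight k = ev (alpha (Ordinal hk)) x by rewrite -flag_weight_lt.
exists (Ordinal hk |: T); last by rewrite big_setU1 //= addrC.
by move=> i; rewrite !inE => /orP [/eqP -> //|/hT /ltnW].
Qed.

Hypothesis hx : forall S : {set 'I_m}, ev (th + \sum_(i in S) alpha i) x != 0.

Lemma prod_subset_sums_neq0 :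
  \prod_(r <- subset_sums flag_weight (m + n)) - (ev th x + r) != 0.
Proof.
rewrite big_seq; apply: (big_ind (fun c => c != 0)); [exact: oner_neq0 | exact: mulf_neq0 |].
by move=> r /subset_sums_flag_weight [T _ ->]; rewrite oppr_eq0 -ev_sumf -evDf.
Qed.

Theorem cocycle_coboundary q f : is_qform q f -> cocycle br th q f -> coboundary br th q f.
Proof.
case: q => [|q] hf hcf.
  move=> X /size0nil ->; have := hcf [:: x] erefl.
  rewrite /dtw /= big_ord1 big_ord0 add0r big_ord1 /= expr0 mul1r => /eqP.
  by rewrite mulf_eq0 => /orP [h|/eqP //]; move: (hx set0); rewrite big_set0 addr0 h.
apply: (coboundary_of_der_prod (x := x) hbr hth hf hcf prod_subset_sums_neq0) => X hX.
apply: (der_prod_subset_sums (fun c u v => lie_linr hbr c u v x) flag_triangular hf hX).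
by move=> l _; apply: in_flag_all.
Qed.

End Vanishing.

Lemma twisted_cohom_nontrivial0 (F : fieldType) (n : nat) (br : 'rV[F]_n -> 'rV[F]_n -> 'rV[F]_n) :
  twisted_cohom_nontrivial br 0.
Proof.
exists 0%N, (fun _ => 1); split.
- by split=> [X i c u w _|X i j _]; rewrite ltn0 ?andbF.
- by move=> X hX; rewrite /dtw hX big_ord1 big_ord0 add0r big_ord1 ev0f mulr0 mul0r.
- by move=> /(_ [::] erefl) /eqP; rewrite oner_eq0.
Qed.

Lemma twisted_cohom_nontrivial_Omega (F : numFieldType) (n : nat)
    (br : 'rV[F]_n -> 'rV[F]_n -> 'rV[F]_n) (m : nat) (v : 'I_m -> 'rV[F]_n)
    (alpha : 'I_m -> 'cV[F]_n) (th : 'cV[F]_n) :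
  is_lie_bracket br -> lie_flag br v alpha -> closed_form br th ->
  twisted_cohom_nontrivial br th -> th = 0 \/ in_Omega alpha (- th).
Proof.
move=> hbr hflag hth [q [f [hf hcf hnc]]].
have [->|th0] := eqVneq th 0; [by left | right].
apply: NNPP => hO; apply: hnc.
have hS (S : {set 'I_m}) : th + \sum_(i in S) alpha i != 0.
  have [->|S0] := eqVneq S set0; first by rewrite big_set0 addr0.
  apply: contra_not_neq hO => e; exists S; split => //.
  by apply: (addrI th); rewrite subrr e.
have [|x hx] := @exists_vec_forms_neq0 _ _
    [seq th + \sum_(i in T) alpha i | T : {set 'I_m} <- enum {: {set 'I_m}}].
  by move=> c /mapP [T _ ->]; apply: hS.
apply: (cocycle_coboundary hbr hflag hth (x := x) _ hf hcf) => S.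
by apply: hx; apply: map_f; rewrite mem_enum.
Qed.

Unset Implicit Arguments.

Theorem mainTheorem4 (R : realType) (n : nat)
    (br : 'rV[R[i]]_n -> 'rV[R[i]]_n -> 'rV[R[i]]_n)
    (m : nat) (v : 'I_m -> 'rV[R[i]]_n) (alpha : 'I_m -> 'cV[R[i]]_n) :
  is_lie_bracket br -> solvable_lie br -> lie_flag br v alpha ->
  exists Ot : 'cV[R[i]]_n -> Prop,
    (forall a, Ot a -> in_Omega alpha a) /\
    (forall (omega : 'cV[R[i]]_n) (lam : R[i]), closed_form br omega ->
       (twisted_cohom_nontrivial br (lam *: omega) <->
        (- (lam *: omega) = 0 \/ Ot (- (lam *: omega))))).
Proof.
(* Solvability is used only through the flag of [g,g] (Lie's theorem), a hypothesis here. *)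
move=> hbr _ hflag.
exists (fun a => in_Omega alpha a /\ twisted_cohom_nontrivial br (- a)).
split=> [a [] // | omega lam homega].
have hth : closed_form br (lam *: omega) by move=> u w; rewrite evZf homega mulr0.
rewrite opprK; split=> [hnt | [/eqP | [] //]].
  have [->|hO] := twisted_cohom_nontrivial_Omega hbr hflag hth hnt; last by right.
  by left; rewrite oppr0.
by rewrite oppr_eq0 => /eqP ->; apply: twisted_cohom_nontrivial0.
Qed.
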